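(* Let $(H,\cdot,1,\Delta,\epsilon,S,\rightharpoonup)$ be a Yetter--Drinfeld post-Hopf algebra, and define $x\bullet_\rightharpoonup y:=x_1\cdot(x_2\rightharpoonup y)$ and $S_\rightharpoonup(x):=\beta_\rightharpoonup(x_1)(S(x_2))$ for $x,y\in H$. Then $H_\rightharpoonup:=(H,\bullet_\rightharpoonup,1,\Delta,\epsilon,S_\rightharpoonup)$ is a Hopf algebra (in particular $\bullet_\rightharpoonup$ is associative with unit $1$, $\Delta$ and $\epsilon$ are multiplicative for $\bullet_\rightharpoonup$, and $S_\rightharpoonup$ is an antipode).
   Context: Conventions: $\Bbbk$ is a field; algebras are associative unital, coalgebras coassociative counital; Sweedler notation $\Delta(c)=c_1\otimes c_2$ (summation omitted), iterated as $c_1\otimes c_2\otimes c_3$ etc.; $H\otimes H$ carries the tensor product coalgebra structure. Definition (Yetter--Drinfeld post-Hopf algebra). A tuple $(H,\cdot,1,\Delta,\epsilon,S,\rightharpoonup)$ where $(H,\cdot,1)$ is an algebra, $(H,\Delta,\epsilon)$ is a coalgebra on the same vector space, $S:H\to H$ is linear with $x_1\cdot S(x_2)=S(x_1)\cdot x_2=\epsilon(x)1$ for all $x$, and $\rightharpoonup:H\otimes H\to H$ is a coalgebra morphism, such that for all $x,y,z\in H$: (P1) $x\rightharpoonup(y\cdot z)=(x_1\rightharpoonup y)\cdot(x_2\rightharpoonup z)$; (P2) $x\rightharpoonup(y\rightharpoonup z)=\big(x_1\cdot(x_2\rightharpoonup y)\big)\rightharpoonup z$; (P3) the map $\alpha_\rightharpoonup:H\to\mathrm{End}(H)$,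 $\alpha_\rightharpoonup(x)(y)=x\rightharpoonup y$, is convolution invertible, i.e. there is $\beta_\rightharpoonup:H\to\mathrm{End}(H)$ with $\alpha_\rightharpoonup(x_1)\circ\beta_\rightharpoonup(x_2)=\beta_\rightharpoonup(x_1)\circ\alpha_\rightharpoonup(x_2)=\epsilon(x)\mathrm{Id}_H$; (P4) $\epsilon(a\cdot b)=\epsilon(a)\epsilon(b)$, $\epsilon(1)=1_\Bbbk$, $\Delta(1)=1\otimes 1$; (P5) $\Delta(x\cdot y)=\Big(x_1\cdot\alpha_\rightharpoonup(x_2)\big(\beta_\rightharpoonup(x_4)(y_1)\big)\Big)\otimes(x_3\cdot y_2)$; (P6) setting $x\bullet_\rightharpoonup y:=x_1\cdot(x_2\rightharpoonup y)$, $S_\rightharpoonup(x):=\beta_\rightharpoonup(x_1)(S(x_2))$ and $x\leftharpoonup y:=\big(S_\rightharpoonup(x_1\rightharpoonup y_1)\bullet_\rightharpoonup x_2\big)\bullet_\rightharpoonup y_2$, one has $\Delta(S_\rightharpoonup(x))=S_\rightharpoonup(x_2)\otimes S_\rightharpoonup(x_1)$ and $(x_1\rightharpoonup y_1)\otimes(x_2\leftharpoonup y_2)=(x_2\rightharpoonup y_2)\otimes(x_1\leftharpoonup y_1)$. *)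

(* Tensor products are not available in MathComp, so
   tensors are handled through their universal property: a comultiplication
   is given by a representative list  Delta x = [:: (a_i, b_i)]  of
   x_1 (x) x_2 = sum_i a_i (x) b_i, and an equality of tensors in H (x) H
   (resp. H (x) H (x) H) is stated as equality of the images under every
   bilinear (resp. trilinear) map into every K-vector space V. *)
From HB Require Import structures.
From mathcomp Require Import all_boot all_algebra.
Set Implicit Arguments.
Unset Strict Implicit.
Unset Printing Implicit Defensive.
Import GRing.Theory.
Local Open Scope ring_scope.

Section PostHopf.
Variables (K : fieldType) (H : lmodType K).

Definition linear1 (V W : lmodType K) (f : V -> W) : Prop :=
  forall (a : K) (x y : V), f (a *: x + y) = a *: f x + f y.

Definition bilin (V : lmodType K) (f : H -> H -> V) : Prop :=
  (forall y, linear1 (fun x => f x y)) /\ (forall x, linear1 (f x)).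

Definition trilin (V : lmodType K) (f : H -> H -> H -> V) : Prop :=
  [/\ forall y z, linear1 (fun x => f x y z),
      forall x z, linear1 (fun y => f x y z) &
      forall x y, linear1 (f x y)].

(* Sweedler sums:  sw2 Delta x F = F x_1 x_2, etc. *)
Definition sw2 (Delta : H -> seq (H * H)) (V : zmodType) (x : H)
  (F : H -> H -> V) : V := \sum_(p <- Delta x) F p.1 p.2.

Definition sw3 (Delta : H -> seq (H * H)) (V : zmodType) (x : H)
  (F : H -> H -> H -> V) : V :=
  sw2 Delta x (fun a b => sw2 Delta b (fun c d => F a c d)).

Definition sw4 (Delta : H -> seq (H * H)) (V : zmodType) (x : H)
  (F : H -> H -> H -> H -> V) : V :=
  sw2 Delta x (fun a b => sw3 Delta b (F a)).

Record is_algebra (mul : H -> H -> H) (one : H) : Prop := {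
  alg_bilin : bilin mul;
  alg_assoc : forall x y z, mul x (mul y z) = mul (mul x y) z;
  alg_mul1 : forall x, mul one x = x;
  alg_mul1r : forall x, mul x one = x }.

Record is_coalgebra (Delta : H -> seq (H * H)) (eps : H -> K) : Prop := {
  coalg_Delta_lin : forall (V : lmodType K) (f : H -> H -> V), bilin f ->
    forall (a : K) (x y : H),
      sw2 Delta (a *: x + y) f = a *: sw2 Delta x f + sw2 Delta y f;
  coalg_eps_lin : forall (a : K) (x y : H), eps (a *: x + y) = a * eps x + eps y;
  coalg_coassoc : forall (V : lmodType K) (f : H -> H -> H -> V), trilin f ->
    forall x, sw2 Delta x (fun a b => sw2 Delta a (fun c d => f c d b))
              = sw3 Delta x f;
  coalg_counit_l : forall x, sw2 Delta x (fun a b => eps a *: b) = x;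
  coalg_counit_r : forall x, sw2 Delta x (fun a b => eps b *: a) = x }.

Record is_bialgebra (mul : H -> H -> H) (one : H)
    (Delta : H -> seq (H * H)) (eps : H -> K) : Prop := {
  bialg_alg : is_algebra mul one;
  bialg_coalg : is_coalgebra Delta eps;
  bialg_Delta_mul : forall x y (V : lmodType K) (f : H -> H -> V), bilin f ->
    sw2 Delta (mul x y) f
    = sw2 Delta x (fun x1 x2 => sw2 Delta y (fun y1 y2 =>
        f (mul x1 y1) (mul x2 y2)));
  bialg_Delta_one : forall (V : lmodType K) (f : H -> H -> V), bilin f ->
    sw2 Delta one f = f one one;
  bialg_eps_mul : forall x y, eps (mul x y) = eps x * eps y;
  bialg_eps_one : eps one = 1 }.

Record is_Hopf (mul : H -> H -> H) (one : H)
    (Delta : H -> seq (H * H)) (eps : H -> K) (S : H -> H) : Prop := {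
  hopf_bialg : is_bialgebra mul one Delta eps;
  hopf_S_lin : linear1 S;
  hopf_antipode_l : forall x, sw2 Delta x (fun a b => mul a (S b)) = eps x *: one;
  hopf_antipode_r : forall x, sw2 Delta x (fun a b => mul (S a) b) = eps x *: one }.

Definition bullet (mul : H -> H -> H) (Delta : H -> seq (H * H))
  (rh : H -> H -> H) (x y : H) : H :=
  sw2 Delta x (fun x1 x2 => mul x1 (rh x2 y)).

Definition Srh (Delta : H -> seq (H * H)) (be : H -> H -> H) (S : H -> H)
  (x : H) : H := sw2 Delta x (fun x1 x2 => be x1 (S x2)).

Definition lh (mul : H -> H -> H) (Delta : H -> seq (H * H))
  (rh be : H -> H -> H) (S : H -> H) (x y : H) : H :=
  sw2 Delta x (fun x1 x2 => sw2 Delta y (fun y1 y2 =>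
    bullet mul Delta rh (bullet mul Delta rh (Srh Delta be S (rh x1 y1)) x2) y2)).

(* Yetter--Drinfeld post-Hopf algebra; [be] is the convolution inverse
   beta of alpha (x) = (x -> _), viewed as a bilinear map be x y = beta(x)(y). *)
Record is_YD_post_Hopf (mul : H -> H -> H) (one : H)
    (Delta : H -> seq (H * H)) (eps : H -> K) (S : H -> H)
    (rh be : H -> H -> H) : Prop := {
  yd_alg : is_algebra mul one;
  yd_coalg : is_coalgebra Delta eps;
  yd_S_lin : linear1 S;
  yd_S_l : forall x, sw2 Delta x (fun a b => mul a (S b)) = eps x *: one;
  yd_S_r : forall x, sw2 Delta x (fun a b => mul (S a) b) = eps x *: one;
  yd_rh_bilin : bilin rh;
  yd_rh_Delta : forall x y (V : lmodType K) (f : H -> H -> V), bilin f ->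
    sw2 Delta (rh x y) f
    = sw2 Delta x (fun x1 x2 => sw2 Delta y (fun y1 y2 =>
        f (rh x1 y1) (rh x2 y2)));
  yd_rh_eps : forall x y, eps (rh x y) = eps x * eps y;
  yd_P1 : forall x y z,
    rh x (mul y z) = sw2 Delta x (fun x1 x2 => mul (rh x1 y) (rh x2 z));
  yd_P2 : forall x y z,
    rh x (rh y z) = rh (sw2 Delta x (fun x1 x2 => mul x1 (rh x2 y))) z;
  yd_be_bilin : bilin be;
  yd_P3_l : forall x y, sw2 Delta x (fun x1 x2 => rh x1 (be x2 y)) = eps x *: y;
  yd_P3_r : forall x y, sw2 Delta x (fun x1 x2 => be x1 (rh x2 y)) = eps x *: y;
  yd_eps_mul : forall a b, eps (mul a b) = eps a * eps b;
  yd_eps_one : eps one = 1;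
  yd_Delta_one : forall (V : lmodType K) (f : H -> H -> V), bilin f ->
    sw2 Delta one f = f one one;
  yd_P5 : forall x y (V : lmodType K) (f : H -> H -> V), bilin f ->
    sw2 Delta (mul x y) f
    = sw4 Delta x (fun x1 x2 x3 x4 => sw2 Delta y (fun y1 y2 =>
        f (mul x1 (rh x2 (be x4 y1))) (mul x3 y2)));
  yd_P6_Srh : forall x (V : lmodType K) (f : H -> H -> V), bilin f ->
    sw2 Delta (Srh Delta be S x) f
    = sw2 Delta x (fun x1 x2 => f (Srh Delta be S x2) (Srh Delta be S x1));
  yd_P6_lh : forall x y (V : lmodType K) (f : H -> H -> V), bilin f ->
    sw2 Delta x (fun x1 x2 => sw2 Delta y (fun y1 y2 =>
      f (rh x1 y1) (lh mul Delta rh be S x2 y2)))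
    = sw2 Delta x (fun x1 x2 => sw2 Delta y (fun y1 y2 =>
      f (rh x2 y2) (lh mul Delta rh be S x1 y1))) }.

End PostHopf.

(* The bullet product is the multiplication of a Hopf algebra because the
   axioms of a post-Hopf algebra are exactly what is needed to move the
   action [->] across products and coproducts: (P1) and (P2) make [bullet]
   associative, while (P5) together with the fact that [->] is a coalgebra
   morphism makes [Delta] multiplicative, the convolution inverse [beta]
   cancelling against [->] through (P3).  For the antipode, (P2) and the left
   antipode identity show that [S_->(x) -> z = beta(x)(z)]; combined with
   [beta(x)(y z) = beta(x_2)(y) beta(x_1)(z)] and the anti-comultiplicativity
   of [S_->] from (P6), this yields the right antipode identity. *)
From HB Require Import structures.
From mathcomp Require Import all_boot all_algebra.
Set Implicit Arguments.
Unset Strict Implicit.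
Unset Printing Implicit Defensive.
Import GRing.Theory.
Local Open Scope ring_scope.

Section Linear1.
Variable K : fieldType.
Implicit Types U V W : lmodType K.

Lemma linear1_0 V W (f : V -> W) : linear1 f -> f 0 = 0.
Proof.
move=> hf; have := hf 1 0 0; rewrite !scale1r !addr0 => e.
by have := congr1 (fun v => v - f 0) e; rewrite /= !addrK subrr.
Qed.

Lemma linear1D V W (f : V -> W) x y : linear1 f -> f (x + y) = f x + f y.
Proof. by move=> hf; have := hf 1 x y; rewrite !scale1r. Qed.

Lemma linear1Z V W (f : V -> W) a x : linear1 f -> f (a *: x) = a *: f x.
Proof. by move=> hf; rewrite -[a *: x]addr0 hf (linear1_0 hf) addr0. Qed.

Lemma linear1_sum V W (f : V -> W) (I : Type) (s : seq I) (F : I -> V) :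
  linear1 f -> f (\sum_(i <- s) F i) = \sum_(i <- s) f (F i).
Proof.
move=> hf; elim: s => [|i s IH]; first by rewrite !big_nil (linear1_0 hf).
by rewrite !big_cons (linear1D _ _ hf) IH.
Qed.

Lemma linear1_id V : linear1 (fun t : V => t).
Proof. by []. Qed.

Lemma linear1_comp U V W (f : V -> W) (g : U -> V) :
  linear1 f -> linear1 g -> linear1 (fun t => f (g t)).
Proof. by move=> hf hg a x y; rewrite hg hf. Qed.

Lemma linear1_scale V W (g : V -> W) c : linear1 g -> linear1 (fun t => c *: g t).
Proof. by move=> hg a x y; rewrite hg scalerDr !scalerA mulrC. Qed.

End Linear1.

Section Sweedler.
Variables (K : fieldType) (H : lmodType K) (Delta : H -> seq (H * H)).
Local Notation sw := (sw2 Delta).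

Lemma eq_sw2 (V : zmodType) x (F G : H -> H -> V) :
  (forall a b, F a b = G a b) -> sw x F = sw x G.
Proof. by move=> e; apply: eq_bigr => p _; rewrite e. Qed.

Lemma exchange_sw2 (V : zmodType) x y (G : H -> H -> H -> H -> V) :
  sw x (fun a b => sw y (G a b)) = sw y (fun c d => sw x (fun a b => G a b c d)).
Proof. exact: exchange_big. Qed.

Lemma linear1_sw2 (V W : lmodType K) (g : V -> W) x F :
  linear1 g -> g (sw x F) = sw x (fun a b => g (F a b)).
Proof. exact: linear1_sum. Qed.

Lemma scaler_sw2 (V : lmodType K) x (F : H -> H -> V) c :
  sw x (fun a b => c *: F a b) = c *: sw x F.
Proof. by rewrite /sw2 scaler_sumr. Qed.

Lemma linear1_sw2_fun (V W : lmodType K) x (F : W -> H -> H -> V) :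
  (forall a b, linear1 (fun t => F t a b)) -> linear1 (fun t => sw x (F t)).
Proof.
move=> hF a u v; rewrite /sw2 scaler_sumr -big_split /=.
by apply: eq_bigr => p _; rewrite hF.
Qed.

Lemma linear1_bilinl (U V : lmodType K) (f : H -> H -> V) (g : U -> H) y :
  bilin f -> linear1 g -> linear1 (fun t => f (g t) y).
Proof. by move=> hf; exact: linear1_comp (hf.1 y). Qed.

Lemma linear1_bilinr (U V : lmodType K) (f : H -> H -> V) (g : U -> H) y :
  bilin f -> linear1 g -> linear1 (fun t => f y (g t)).
Proof. by move=> hf; exact: linear1_comp (hf.2 y). Qed.

Variable eps : H -> K.
Hypothesis hc : is_coalgebra Delta eps.

Lemma linear1_sw2_arg (V W : lmodType K) (F : H -> H -> V) (g : W -> H) :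
  bilin F -> linear1 g -> linear1 (fun t => sw (g t) F).
Proof. by move=> hF hg a x y; rewrite hg (coalg_Delta_lin hc hF). Qed.

Lemma linear1_epsZ (V W : lmodType K) (g : W -> H) (v : V) :
  linear1 g -> linear1 (fun t => eps (g t) *: v).
Proof. by move=> hg a x y; rewrite hg (coalg_eps_lin hc) scalerDl scalerA. Qed.

Lemma counitl_sw2 (V : lmodType K) (g : H -> V) x :
  linear1 g -> sw x (fun a b => eps a *: g b) = g x.
Proof.
move=> hg; rewrite -{2}(coalg_counit_l hc x) (linear1_sw2 _ _ hg).
by apply: eq_sw2 => a b; rewrite (linear1Z _ _ hg).
Qed.

Lemma counitr_sw2 (V : lmodType K) (g : H -> V) x :
  linear1 g -> sw x (fun a b => eps b *: g a) = g x.
Proof.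
move=> hg; rewrite -{2}(coalg_counit_r hc x) (linear1_sw2 _ _ hg).
by apply: eq_sw2 => a b; rewrite (linear1Z _ _ hg).
Qed.

Lemma eps0 : eps 0 = 0.
Proof.
have := coalg_eps_lin hc 1 0 0; rewrite scale1r addr0 mul1r => e.
by have := congr1 (fun v => v - eps 0) e; rewrite /= addrK subrr.
Qed.

Lemma epsZ c v : eps (c *: v) = c * eps v.
Proof. by have := coalg_eps_lin hc c v 0; rewrite addr0 eps0 addr0. Qed.

Lemma eps_sum (I : Type) (s : seq I) (F : I -> H) :
  eps (\sum_(i <- s) F i) = \sum_(i <- s) eps (F i).
Proof.
elim: s => [|i s IH]; first by rewrite !big_nil eps0.
by rewrite !big_cons -[F i]scale1r (coalg_eps_lin hc) mul1r scale1r IH.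
Qed.

End Sweedler.

Section YetterDrinfeldPostHopf.
Variables (K : fieldType) (H : lmodType K).
Variables (mul : H -> H -> H) (one : H) (Delta : H -> seq (H * H)) (eps : H -> K)
    (S : H -> H) (rh be : H -> H -> H).
Hypothesis hyd : is_YD_post_Hopf mul one Delta eps S rh be.
Local Notation sw := (sw2 Delta).
Local Notation hc := (yd_coalg hyd).
Local Notation hA := (yd_alg hyd).
Local Notation bu := (bullet mul Delta rh).
Local Notation Sb := (Srh Delta be S).
Local Notation counitl g := (@counitl_sw2 _ _ _ _ hc _ g).
Local Notation counitr g := (@counitr_sw2 _ _ _ _ hc _ g).

Ltac bilin_fact :=
  first [ exact: (alg_bilin hA) | exact: (yd_rh_bilin hyd)
        | exact: (yd_be_bilin hyd) | assumption ].

Ltac linearity :=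
  repeat match goal with |- forall _, _ => intro end;
  rewrite ?/sw3 ?/sw4 ?/bullet ?/Srh;
  lazymatch goal with
  | |- bilin _ => split; linearity
  | |- linear1 ?g0 =>
     lazymatch g0 with
     | fun _ => _ => idtac
     | _ => change (linear1 (fun t => g0 t))
     end;
     first
     [ exact: linear1_id
     | match goal with
       | |- linear1 (fun t => eps (@?g t) *: ?v) =>
           apply: (@linear1_epsZ _ _ _ _ hc _ _ g v); linearity
       | |- linear1 (fun t => ?c *: (@?g t)) => apply: (@linear1_scale _ _ _ g c); linearity
       | |- linear1 (fun t => sw2 Delta (@?g t) ?F) =>
           apply: (@linear1_sw2_arg _ _ _ _ hc _ _ F g); linearity
       | |- linear1 (fun t => sw2 Delta ?x (@?F t)) => apply: (@linear1_sw2_fun _ _ _ _ _ x F); linearity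
       | |- linear1 (fun t => S (@?g t)) => apply: (linear1_comp (yd_S_lin hyd)); linearity
       | |- linear1 (fun t => ?f (@?g t) ?y) => apply: (@linear1_bilinl _ _ _ _ f g y); [bilin_fact | linearity]
       | |- linear1 (fun t => ?f ?y (@?g t)) => apply: (@linear1_bilinr _ _ _ _ f g y); [bilin_fact | linearity]
       | h : _ |- _ => exact: h
       end ]
  end.

Lemma coassoc (V : lmodType K) (f : H -> H -> H -> V) x : trilin f ->
  sw x (fun a b => sw a (fun c d => f c d b)) = sw x (fun a b => sw b (fun c d => f a c d)).
Proof. by move=> hf; rewrite (coalg_coassoc hc hf). Qed.

Definition quadrilin (V : lmodType K) (G : H -> H -> H -> H -> V) :=
  [/\ forall b c d, linear1 (fun t => G t b c d), forall a c d, linear1 (fun t => G a t c d),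
      forall a b d, linear1 (fun t => G a b t d) & forall a b c, linear1 (fun t => G a b c t)].

Lemma sw4_bracket22 (V : lmodType K) (G : H -> H -> H -> H -> V) x : quadrilin G ->
  sw x (fun a b => sw a (fun u v => sw b (G u v))) = sw4 Delta x G.
Proof.
case=> h1 h2 h3 h4.
by rewrite (@coassoc _ (fun u v b => sw b (G u v))) //; split; linearity.
Qed.

Lemma sw4_bracket121 (V : lmodType K) (G : H -> H -> H -> H -> V) x : quadrilin G ->
  sw x (fun a b => sw a (fun u r => sw r (fun v p => G u v p b))) = sw4 Delta x G.
Proof.
case=> h1 h2 h3 h4.
rewrite (@coassoc _ (fun u r b => sw r (fun v p => G u v p b))); last by split; linearity.
apply: eq_sw2 => a b.
by rewrite (@coassoc _ (G a)) //; split; linearity.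
Qed.

Lemma sw4_bracket1_21 (V : lmodType K) (G : H -> H -> H -> H -> V) x : quadrilin G ->
  sw4 Delta x G = sw x (fun a r => sw r (fun z d => sw z (fun b c => G a b c d))).
Proof.
case=> h1 h2 h3 h4; apply: eq_sw2 => a r.
by rewrite (@coassoc _ (G a)) //; split; linearity.
Qed.

Lemma sw6_regroup (V : lmodType K) (G : H -> H -> H -> H -> H -> H -> V) x :
  (forall b c d e f, linear1 (fun t => G t b c d e f)) ->
  (forall a c d e f, linear1 (fun t => G a t c d e f)) ->
  (forall a b d e f, linear1 (fun t => G a b t d e f)) ->
  (forall a b c e f, linear1 (fun t => G a b c t e f)) ->
  (forall a b c d f, linear1 (fun t => G a b c d t f)) ->
  (forall a b c d e, linear1 (fun t => G a b c d e t)) ->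
  sw x (fun a b => sw4 Delta a (fun a1 a2 a3 a4 => sw b (G a1 a2 a3 a4)))
  = sw4 Delta x (fun a1 a2 a3 r => sw r (fun z b2 => sw z (fun a4 b1 => G a1 a2 a3 a4 b1 b2))).
Proof.
move=> h1 h2 h3 h4 h5 h6; rewrite /sw4 /sw3.
rewrite coassoc; last by split; linearity.
apply: eq_sw2 => a1 s; rewrite coassoc; last by split; linearity.
apply: eq_sw2 => a2 s'; rewrite coassoc; last by split; linearity.
apply: eq_sw2 => a3 s''.
by rewrite [RHS]coassoc //; split; linearity.
Qed.

Lemma mulZr x c y : mul x (c *: y) = c *: mul x y.
Proof. exact: (linear1Z _ _ ((alg_bilin hA).2 x)). Qed.
Lemma mulZl x c y : mul (c *: x) y = c *: mul x y.
Proof. exact: (linear1Z _ _ ((alg_bilin hA).1 y)). Qed.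
Lemma rhZl x c y : rh (c *: x) y = c *: rh x y.
Proof. exact: (linear1Z _ _ ((yd_rh_bilin hyd).1 y)). Qed.
Lemma beZr x c y : be x (c *: y) = c *: be x y.
Proof. exact: (linear1Z _ _ ((yd_be_bilin hyd).2 x)). Qed.

Lemma bilinl_sw2 (V : lmodType K) (f : H -> H -> V) y x F : bilin f ->
  f (sw x F) y = sw x (fun a b => f (F a b) y).
Proof. by move=> hf; rewrite (@linear1_sw2 _ _ _ _ _ (fun u => f u y)) //; linearity. Qed.
Lemma bilinr_sw2 (V : lmodType K) (f : H -> H -> V) y x F : bilin f ->
  f y (sw x F) = sw x (fun a b => f y (F a b)).
Proof. by move=> hf; apply: linear1_sw2; linearity. Qed.

Lemma mul_sw2l y x F : mul (sw x F) y = sw x (fun a b => mul (F a b) y).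
Proof. exact: bilinl_sw2 (alg_bilin hA). Qed.
Lemma mul_sw2r y x F : mul y (sw x F) = sw x (fun a b => mul y (F a b)).
Proof. exact: bilinr_sw2 (alg_bilin hA). Qed.
Lemma rh_sw2l y x F : rh (sw x F) y = sw x (fun a b => rh (F a b) y).
Proof. exact: bilinl_sw2 (yd_rh_bilin hyd). Qed.
Lemma rh_sw2r y x F : rh y (sw x F) = sw x (fun a b => rh y (F a b)).
Proof. exact: bilinr_sw2 (yd_rh_bilin hyd). Qed.
Lemma be_sw2r y x F : be y (sw x F) = sw x (fun a b => be y (F a b)).
Proof. exact: bilinr_sw2 (yd_be_bilin hyd). Qed.

Lemma rh1r x : rh x one = eps x *: one.
Proof.
rewrite -(yd_P3_l hyd x one).
under eq_sw2 => a b do rewrite -[be b one](alg_mul1 hA) (yd_P1 hyd).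
rewrite coassoc; last by split; linearity.
under eq_sw2 => a b do rewrite -mul_sw2r ?(yd_P3_l hyd) ?mulZr ?(alg_mul1r hA).
by rewrite (counitr (fun a => rh a one)) //; linearity.
Qed.

Lemma rh1l z : rh one z = z.
Proof.
have rh11 : rh one one = one by rewrite rh1r (yd_eps_one hyd) scale1r.
have be1_rh1 w : be one (rh one w) = w.
  have := yd_P3_r hyd one w; rewrite (yd_Delta_one hyd); last by linearity.
  by rewrite (yd_eps_one hyd) scale1r.
have rh1_idem : rh one (rh one z) = rh one z.
  by rewrite (yd_P2 hyd) (yd_Delta_one hyd) ?rh11 ?(alg_mul1 hA) //; linearity.
by have := congr1 (be one) rh1_idem; rewrite !be1_rh1.
Qed.

Lemma bullet1l y : bu one y = y.
Proof. by rewrite /bullet (yd_Delta_one hyd) ?(alg_mul1 hA) ?rh1l //; linearity. Qed.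

Lemma bullet1r x : bu x one = x.
Proof.
rewrite /bullet; under eq_sw2 => a b do rewrite rh1r mulZr (alg_mul1r hA).
by rewrite (counitr id) //; linearity.
Qed.

Lemma rh_bullet x y z : rh (bu x y) z = rh x (rh y z).
Proof. by rewrite (yd_P2 hyd). Qed.

Lemma sw2_beta_rh (V : lmodType K) (f : H -> H -> V) z y : bilin f ->
  sw z (fun p q => sw y (fun c d => f (be p (rh q c)) d)) = eps z *: sw y f.
Proof.
move=> hf; rewrite exchange_sw2 -scaler_sw2; apply: eq_sw2 => c d.
by rewrite -bilinl_sw2 // (yd_P3_r hyd) (linear1Z _ _ (hf.1 d)).
Qed.

Lemma Delta_bullet x y (V : lmodType K) (f : H -> H -> V) : bilin f ->
  sw (bu x y) f = sw x (fun x1 x2 => sw y (fun y1 y2 => f (bu x1 y1) (bu x2 y2))).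
Proof.
move=> hf; rewrite /bullet (@linear1_sw2 _ _ _ _ _ (fun t => sw t f)); last by linearity.
transitivity (sw x (fun a b => sw4 Delta a (fun a1 a2 a3 a4 => sw b (fun b1 b2 =>
   sw y (fun y1 y2 => f (mul a1 (rh a2 (be a4 (rh b1 y1)))) (mul a3 (rh b2 y2))))))).
  apply: eq_sw2 => a b; rewrite (yd_P5 hyd _ _ hf).
  apply: eq_sw2 => a1 q; apply: eq_sw2 => a2 r; apply: eq_sw2 => a3 a4.
  by rewrite (yd_rh_Delta hyd); last by linearity.
rewrite sw6_regroup; try by linearity.
transitivity (sw4 Delta x (fun a1 a2 a3 a4 =>
   sw y (fun y1 y2 => f (mul a1 (rh a2 y1)) (mul a3 (rh a4 y2))))).
  rewrite /sw4 /sw3; apply: eq_sw2 => a1 q; apply: eq_sw2 => a2 r; apply: eq_sw2 => a3 s.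
  transitivity (sw s (fun z b2 =>
      eps z *: sw y (fun y1 y2 => f (mul a1 (rh a2 y1)) (mul a3 (rh b2 y2))))).
    apply: eq_sw2 => z b2.
    by rewrite (@sw2_beta_rh _ (fun E d => f (mul a1 (rh a2 E)) (mul a3 (rh b2 d)))) //;
      linearity.
  by rewrite (counitl (fun b2 => sw y (fun y1 y2 =>
        f (mul a1 (rh a2 y1)) (mul a3 (rh b2 y2))))) //; linearity.
rewrite -sw4_bracket22; last by split; linearity.
apply: eq_sw2 => x1 x2.
under eq_sw2 => u v do rewrite exchange_sw2.
rewrite exchange_sw2; apply: eq_sw2 => y1 y2.
by rewrite bilinl_sw2 //; apply: eq_sw2 => u v; rewrite bilinr_sw2.
Qed.

Lemma bulletA x y z : bu x (bu y z) = bu (bu x y) z.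
Proof.
rewrite [RHS](Delta_bullet _ _ (f := fun a b => mul a (rh b z))); last by linearity.
transitivity (sw x (fun a b => sw y (fun c d =>
    sw b (fun e g => mul a (mul (rh e c) (rh g (rh d z))))))).
  rewrite {1}/bullet; apply: eq_sw2 => a b.
  rewrite /bullet rh_sw2r mul_sw2r; apply: eq_sw2 => c d.
  by rewrite (yd_P1 hyd) mul_sw2r.
transitivity (sw x (fun a b => sw y (fun c d =>
    sw a (fun u v => mul (mul u (rh v c)) (rh b (rh d z)))))); last first.
  apply: eq_sw2 => a b; apply: eq_sw2 => c d.
  by rewrite rh_bullet /bullet mul_sw2l.
rewrite exchange_sw2 [RHS]exchange_sw2; apply: eq_sw2 => c d.
rewrite [RHS]coassoc; last by split; linearity.
apply: eq_sw2 => a b; apply: eq_sw2 => e g.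
by rewrite (alg_assoc hA).
Qed.

Lemma eps_bullet x y : eps (bu x y) = eps x * eps y.
Proof.
rewrite /bullet /sw2 (eps_sum hc).
under eq_bigr => p _ do rewrite (yd_eps_mul hyd) (yd_rh_eps hyd) mulrA.
rewrite -mulr_suml; congr (_ * _).
rewrite -{2}(coalg_counit_l hc x) /sw2 (eps_sum hc).
by apply: eq_bigr => p _; rewrite (epsZ hc).
Qed.

Lemma bullet_antipodel x : sw x (fun a b => bu a (Sb b)) = eps x *: one.
Proof.
transitivity (sw4 Delta x (fun a1 a2 b1 b2 => mul a1 (rh a2 (be b1 (S b2))))).
  rewrite -sw4_bracket22; last by split; linearity.
  apply: eq_sw2 => a b; rewrite /bullet /Srh; apply: eq_sw2 => a1 a2.
  by rewrite rh_sw2r mul_sw2r.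
rewrite sw4_bracket1_21; last by split; linearity.
rewrite -(yd_S_l hyd x); apply: eq_sw2 => a1 r.
transitivity (sw r (fun z d => eps z *: mul a1 (S d))).
  by apply: eq_sw2 => z d; rewrite -mul_sw2r (yd_P3_l hyd) mulZr.
by rewrite (counitl (fun d => mul a1 (S d))) //; linearity.
Qed.

Lemma rh_rh_Srh x z : sw x (fun a b => rh a (rh (Sb b) z)) = eps x *: z.
Proof.
under eq_sw2 => a b do rewrite -rh_bullet.
by rewrite -rh_sw2l bullet_antipodel rhZl rh1l.
Qed.

Lemma rh_Srh x z : rh (Sb x) z = be x z.
Proof.
rewrite -(counitl (fun b => rh (Sb b) z)); last by linearity.
under eq_sw2 => a b do rewrite -(yd_P3_r hyd).
rewrite coassoc; last by split; linearity.
under eq_sw2 => a b do rewrite -be_sw2r rh_rh_Srh beZr.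
by rewrite (counitr (fun a => be a z)) //; linearity.
Qed.

Lemma be1r x : be x one = eps x *: one.
Proof.
rewrite -(yd_P3_r hyd x one).
under eq_sw2 => a b do rewrite rh1r beZr.
by rewrite (counitr (fun a => be a one)) //; linearity.
Qed.

Lemma be_mulr x y z : be x (mul y z) = sw x (fun a b => mul (be b y) (be a z)).
Proof.
set w := fun t => sw t (fun a b => mul (be b y) (be a z)).
have w_lin : linear1 w by rewrite /w; linearity.
(* [x_1 -> w(x_2)] = [eps x (y z)]: [w] is a right convolution inverse of [->]
   on [y z], so it agrees with the left inverse [beta]. *)
have rh_w b : sw b (fun c d => rh c (w d)) = eps b *: mul y z.
  transitivity (sw4 Delta b (fun c1 c2 p q => mul (rh c1 (be q y)) (rh c2 (be p z)))).
    rewrite -sw4_bracket22; last by split; linearity.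
    apply: eq_sw2 => c d; rewrite /w rh_sw2r exchange_sw2; apply: eq_sw2 => p q.
    by rewrite (yd_P1 hyd).
  rewrite sw4_bracket1_21; last by split; linearity.
  rewrite -mulZl -(yd_P3_l hyd) mul_sw2l; apply: eq_sw2 => c1 r.
  transitivity (sw r (fun s q => eps s *: mul (rh c1 (be q y)) z)).
    by apply: eq_sw2 => s q; rewrite -mul_sw2r (yd_P3_l hyd) mulZr.
  by rewrite (counitl (fun q => mul (rh c1 (be q y)) z)) //; linearity.
rewrite -/(w x) -(counitl w) //.
under eq_sw2 => a b do rewrite -(yd_P3_r hyd).
rewrite coassoc; last by rewrite /w; split; linearity.
under eq_sw2 => a b do rewrite -be_sw2r rh_w beZr.
by rewrite (counitr (fun a => be a (mul y z))) //; linearity.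
Qed.

Lemma bullet_antipoder x : sw x (fun a b => bu (Sb a) b) = eps x *: one.
Proof.
transitivity (sw x (fun a b => sw a (fun a1 a2 => mul (Sb a2) (be a1 b)))).
  apply: eq_sw2 => a b; rewrite /bullet (yd_P6_Srh hyd); last by linearity.
  by apply: eq_sw2 => a1 a2; rewrite rh_Srh.
transitivity (sw4 Delta x (fun a1 c d b => mul (be c (S d)) (be a1 b))).
  rewrite -sw4_bracket121; last by split; linearity.
  apply: eq_sw2 => a b; apply: eq_sw2 => a1 a2.
  by rewrite /Srh mul_sw2l.
rewrite -sw4_bracket22; last by split; linearity.
rewrite -be1r -(counitr (fun z => be z one)); last by linearity.
apply: eq_sw2 => z r; rewrite exchange_sw2.
under eq_sw2 => d b do rewrite -be_mulr.
by rewrite -be_sw2r (yd_S_r hyd) beZr.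
Qed.

Lemma bullet_Hopf : is_Hopf bu one Delta eps Sb.
Proof.
split; first split.
- split; [by split; linearity | exact: bulletA | exact: bullet1l | exact: bullet1r].
- exact: hc.
- by move=> x y V f hf; exact: Delta_bullet.
- exact: (yd_Delta_one hyd).
- exact: eps_bullet.
- exact: (yd_eps_one hyd).
- by linearity.
- exact: bullet_antipodel.
- exact: bullet_antipoder.
Qed.

End YetterDrinfeldPostHopf.

Theorem proposition3 (K : fieldType) (H : lmodType K)
    (mul : H -> H -> H) (one : H) (Delta : H -> seq (H * H)) (eps : H -> K)
    (S : H -> H) (rh be : H -> H -> H) :
  is_YD_post_Hopf mul one Delta eps S rh be ->
  is_Hopf (bullet mul Delta rh) one Delta eps (Srh Delta be S).
Proof. exact: bullet_Hopf. Qed.
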